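(* Let $(X,0)$ be a pointed CFG-space over a Boolean algebra $B$ and let $U\subset X$ be a subset which is a CFG-space with the restricted metric and satisfies $0\in U$. Then for every $n\in\mathbb{N}$, $$\alpha_n(X)=\bigvee_{i=0}^{n}\alpha_i(U)\wedge\alpha_{n-i}(U^\perp).$$
   Context: A Boolean metric space over $B$ is a set $X$ with symmetric $d:X\times X\to B$, $d(x,y)=0$ iff $x=y$, and $d(x,z)\le d(x,y)\vee d(y,z)$. A partition of $B$ is a finite family of pairwise disjoint elements with supremum $1$; $x$ is a convex combination of $x_0,\dots,x_n$ with coefficients a partition $a_0,\dots,a_n$ if $a_i\wedge d(x,x_i)=0$ for all $i$. A CFG-space is a Boolean metric space that is convex (every such convex combination of its points exists in it) and finitely generated (some finite subset $S$ has every point as a convex combination of points of $S$). For a pointed space $(X,0)$ write $|x|=d(x,0)$; $x\perp y$ means $d(x,y)=|x|\vee|y|$; for $0\in U\subset X$, $U^\perp=\{y\in X: x\perp y\ \forall x\in U\}$. For a space $Y$ and integer $k>0$, $\alpha_k(Y)=\sup\{\bigwedge_{0\le i<j\le k}d(u_i,u_j): u_0,\dots,u_k\in Y\}$ (for CFG-spaces this supremum exists and is attained), and by convention $\alpha_0(Y)=1$. *)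

(* A Boolean algebra is a ctbDistrLatticeType (complemented
   distributive lattice with top and bottom). *)
From HB Require Import structures.
From mathcomp Require Import all_boot all_order.
From Stdlib Require Import ClassicalEpsilon.
Set Implicit Arguments. Unset Strict Implicit. Unset Printing Implicit Defensive.
Import Order.Theory.
Local Open Scope order_scope.

Section BMS.
Context {disp : Order.disp_t} {B : ctbDistrLatticeType disp} {X : Type}.
Variable dist : X -> X -> B.

Definition bool_metric (S : X -> Prop) : Prop :=
  (forall x y, S x -> S y -> dist x y = dist y x) /\
  (forall x y, S x -> S y -> (dist x y = \bot <-> x = y)) /\
  (forall x y z, S x -> S y -> S z -> dist x z <= dist x y `|` dist y z).

Definition partition n (a : 'I_n.+1 -> B) : Prop :=
  (forall i j, i != j -> a i `&` a j = \bot) /\ \join_(i < n.+1) a i = \top.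

Definition convex_comb (x : X) n (a : 'I_n.+1 -> B) (xs : 'I_n.+1 -> X) : Prop :=
  forall i, a i `&` dist x (xs i) = \bot.

Definition convex (S : X -> Prop) : Prop :=
  forall n (a : 'I_n.+1 -> B) (xs : 'I_n.+1 -> X),
    partition a -> (forall i, S (xs i)) ->
    exists x, S x /\ convex_comb x a xs.

Definition fin_gen (S : X -> Prop) : Prop :=
  exists s : seq X, (forall y, List.In y s -> S y) /\
    forall x, S x -> exists n (a : 'I_n.+1 -> B) (xs : 'I_n.+1 -> X),
      partition a /\ (forall i, List.In (xs i) s) /\ convex_comb x a xs.

Definition CFG (S : X -> Prop) : Prop :=
  bool_metric S /\ convex S /\ fin_gen S.

Definition orth (x0 x y : X) : Prop := dist x y = dist x x0 `|` dist y x0.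

(* U^⊥ inside X (X is the whole type) *)
Definition perp (U : X -> Prop) (x0 : X) : X -> Prop :=
  fun y => forall x, U x -> orth x0 x y.

Definition is_lub (P : B -> Prop) (a : B) : Prop :=
  (forall b, P b -> b <= a) /\ (forall c, (forall b, P b -> b <= c) -> a <= c).

Definition alpha_set (S : X -> Prop) (k : nat) : B -> Prop :=
  fun b => exists u : 'I_k.+1 -> X, (forall i, S (u i)) /\
    b = \meet_(i < k.+1) \meet_(j < k.+1 | (i < j)%N) dist (u i) (u j).

(* alpha_0 = 1; alpha_k = the supremum (chosen by epsilon; it exists for CFG-spaces) *)
Definition alpha (S : X -> Prop) (k : nat) : B :=
  if k is 0 then \top else epsilon (inhabits \bot) (is_lub (alpha_set S k)).

End BMS.

(* Points are compared locally: x and y agree on c when c /\ d(x, y) = 0, and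
   on c distances may be computed with either point. A list is c-separated when
   its entries are pairwise at distance >= c, so that alpha_k(S) is the supremum
   of the c admitting a c-separated list of length k+1 in S.

   1. Suprema: for finitely generated S this supremum exists, since refining a
      separated tuple along the partitions expressing its points as convex
      combinations of generators bounds it by a finite join over generators.
   2. Decomposition: convexity and finite generation of U give, for each x, an
      r such that x lies in U on r and is away from U on ~r; gluing 0 on r with
      x on ~r gives a component of x in U^perp. These components of generators
      of X generate U^perp.
   3. Upper bound: split a separated (n+1)-list of X into pieces of B deciding
      every such r; on each piece it yields separated lists in U and in U^perp
      (with 0 added) of total length n+2.
   4. Lower bound: a separated list of U and a separated list v0, v1, ... of
      U^perp merge into a separated list of X after relocating each v_j to v0
      where v_j vanishes; this loses one point.
   Since alpha_n(X) is a least upper bound, 3 and 4 give the formula. *)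

From Pilot Require Import Defs.
From HB Require Import structures.
From mathcomp Require Import all_boot all_order.
From mathcomp Require Import zify.
From Stdlib Require Import ClassicalEpsilon.
Set Implicit Arguments. Unset Strict Implicit. Unset Printing Implicit Defensive.
Import Order.Theory.
Local Open Scope order_scope.

Section BooleanAlgebra.
Context {disp : Order.disp_t} {B : ctbDistrLatticeType disp}.
Implicit Types a b c e J : B.

Lemma le_by_cases a c J : a `&` c <= J -> a `&` ~` c <= J -> a <= J.
Proof.
move=> h1 h2.
by rewrite -[a]meetx1 -(joinxC c) meetUr leUx h1 h2.
Qed.

Lemma eq_by_cases a b c : a `&` c = b `&` c -> a `&` ~` c = b `&` ~` c -> a = b.
Proof. by move=> h1 h2; rewrite -[a]meetx1 -[b]meetx1 -(joinxC c) !meetUr h1 h2. Qed.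

Lemma le_by_partition n (a : 'I_n.+1 -> B) e J :
  Defs.partition a -> (forall i, e `&` a i <= J) -> e <= J.
Proof.
move=> [_ top] h; rewrite -[e]meetx1 -top.
by elim/big_rec: _ => [|i x _ IH]; rewrite ?meetx0 ?le0x // meetUr leUx h IH.
Qed.

Lemma le_by_decisions (bs : seq B) e J :
  (forall c, c <= e -> all (fun b => (c <= b) || (c <= ~` b)) bs -> c <= J) ->
  e <= J.
Proof.
elim: bs e => [|b bs IH] e h; first exact: h.
have below b' c : c <= e `&` b' -> c <= e /\ c <= b' by rewrite lexI => /andP.
apply: (le_by_cases (c := b)); apply: IH => c /below [ce cb] decided; apply: h => //=.
  by rewrite cb decided.
by rewrite cb orbT decided.
Qed.

(* In a Boolean algebra, meets distribute over arbitrary existing suprema. *)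
Lemma lub_meet_le (P : B -> Prop) a x J :
  is_lub P a -> (forall b, P b -> b `&` x <= J) -> a `&` x <= J.
Proof.
move=> [_ least] h.
have ub : a <= ~` x `|` J.
  apply: least => b /h hb; apply: (le_by_cases (c := x)); first exact: le_trans hb (leUr _ _).
  exact: le_trans (leIr _ _) (leUl _ _).
apply: le_trans (leI2 ub (lexx x)) _.
by rewrite meetUl meetCx join0x leIl.
Qed.

End BooleanAlgebra.

Section Lists.
Context {T : Type}.
Implicit Types (s : seq T) (S : T -> Prop).

Lemma nth_In x0 s i : (i < size s)%N -> List.In (nth x0 s i) s.
Proof. by elim: s i => [|y s IH] [|i] //= hi; [left | right; apply: IH]. Qed.

Lemma In_nth_ord x0 s y : List.In y s -> exists j : 'I_(size s), nth x0 s j = y.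
Proof.
elim: s => [|z s IH] //= [<-|/IH [j <-]]; first by exists ord0.
by exists (lift ord0 j).
Qed.

Lemma Forall_nth x0 S s i : List.Forall S s -> (i < size s)%N -> S (nth x0 s i).
Proof.
move=> /List.Forall_forall hs /(nth_In x0); exact: hs.
Qed.

Lemma Forall_tuple k S (u : 'I_k.+1 -> T) :
  (forall i, S (u i)) -> List.Forall S [seq u i | i <- enum 'I_k.+1].
Proof. by move=> hu; apply/List.Forall_map/List.Forall_forall. Qed.

Lemma Forall_all (a : pred T) s : List.Forall a s <-> all a s.
Proof.
elim: s => [|x s IH]; first by split.
by rewrite List.Forall_cons_iff IH /=; split=> [[-> ->]|/andP[-> ->]].
Qed.

End Lists.

Section BooleanMetric.
Context {disp : Order.disp_t} {B : ctbDistrLatticeType disp} {X : Type}.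
Variable dist : X -> X -> B.
Hypothesis dist_sym : forall x y, dist x y = dist y x.
Hypothesis dist_self : forall x, dist x x = \bot.
Hypothesis dist_tri : forall x y z, dist x z <= dist x y `|` dist y z.
Implicit Types (a b c J : B) (x y z p q : X).

Definition agree_on c x y : bool := c `&` dist x y == \bot.

Lemma agree_on_refl c x : agree_on c x x.
Proof. by rewrite /agree_on dist_self meetx0. Qed.

Lemma agree_onC c x y : agree_on c x y = agree_on c y x.
Proof. by rewrite /agree_on dist_sym. Qed.

Lemma agree_on_le c c' x y : c' <= c -> agree_on c x y -> agree_on c' x y.
Proof. by move=> le; rewrite /agree_on -!lex0; apply/le_trans/leI2. Qed.

Lemma agree_onU c c' x y :
  agree_on (c `|` c') x y = agree_on c x y && agree_on c' x y.
Proof. by rewrite /agree_on meetUl join_eq0. Qed.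

Lemma agree_on_trans c x y z : agree_on c x y -> agree_on c y z -> agree_on c x z.
Proof.
rewrite /agree_on -!lex0 => hxy hyz.
by apply: le_trans (leI2 (lexx c) (dist_tri x y z)) _; rewrite meetUr leUx hxy.
Qed.

Lemma agree_on_cases b c x y :
  agree_on (c `&` b) x y -> agree_on (c `&` ~` b) x y -> agree_on c x y.
Proof. by move=> h1 h2; rewrite -[c]meetx1 -(joinxC b) meetUr agree_onU h1. Qed.

(* Where y coincides with z, a point at distance at least c from y is at
   distance at least c from z. *)
Lemma le_dist_shift c x y z : c <= dist x y -> c `&` ~` dist y z <= dist x z.
Proof.
move=> h; apply: le_trans (leI2 (le_trans h (dist_tri x z y)) (lexx _)) _.
by rewrite meetUl (dist_sym z) meetxC joinx0 leIl.
Qed.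

Lemma agree_on_dist c x x' y y' : agree_on c x x' -> agree_on c y y' ->
  c `&` dist x y = c `&` dist x' y'.
Proof.
have le_dist u u' v v' : agree_on c u u' -> agree_on c v v' ->
    c `&` dist u v <= c `&` dist u' v'.
  rewrite /agree_on -!lex0 => hu hv.
  have tri : dist u v <= dist u u' `|` (dist u' v' `|` dist v' v).
    apply: le_trans (dist_tri u u' v) (leU2 (lexx _) (dist_tri u' v' v)).
  apply: le_trans (leI2 (lexx c) tri) _.
  rewrite !meetUr !leUx lexx (le_trans hu) ?le0x //=.
  by rewrite dist_sym (le_trans hv) ?le0x.
move=> hx hy; apply/le_anti; rewrite le_dist //=.
by apply: le_dist; rewrite agree_onC.
Qed.

Lemma agree_on_le_dist c x x' y y' : agree_on c x x' -> agree_on c y y' ->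
  (c <= dist x y) = (c <= dist x' y').
Proof.
by move=> hx hy; apply/meet_idPl/meet_idPl; rewrite (agree_on_dist hx hy).
Qed.

Definition sep c (s : seq X) : bool := pairwise (fun x y => c <= dist x y) s.

Lemma sep_le c c' s : c' <= c -> sep c s -> sep c' s.
Proof. by move=> le; apply: sub_pairwise => x y; apply: le_trans. Qed.

Lemma sep_map c (f : X -> X) s :
  all (fun x => agree_on c x (f x)) s -> sep c s -> sep c (map f s).
Proof.
rewrite /sep pairwise_map; apply: sub_in_pairwise => x y hx hy /=.
by rewrite (agree_on_le_dist hx hy).
Qed.

Definition min_dist k (u : 'I_k.+1 -> X) : B :=
  \meet_(i < k.+1) \meet_(j < k.+1 | (i < j)%N) dist (u i) (u j).

Lemma le_min_dist k (u : 'I_k.+1 -> X) c :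
  (c <= min_dist u) = sep c [seq u i | i <- enum 'I_k.+1].
Proof.
rewrite /sep pairwise_map; apply/meetsP/(pairwiseP ord0) => [h a b|h i _].
  rewrite !inE size_enum_ord => ha hb ab.
  rewrite -[a]/(nat_of_ord (Ordinal ha)) -[b]/(nat_of_ord (Ordinal hb)) !nth_ord_enum.
  by move/meetsP: (h (Ordinal ha) isT); apply.
apply/meetsP => j ij; move: (h i j); rewrite !nth_ord_enum; apply => //.
  by rewrite inE size_enum_ord.
by rewrite inE size_enum_ord.
Qed.

Lemma min_dist_of_seq x0 k c (s : seq X) : size s = k.+1 -> sep c s ->
  c <= min_dist (fun i : 'I_k.+1 => nth x0 s i).
Proof.
move=> hs; rewrite le_min_dist.
by rewrite (map_comp (nth x0 s) val) val_enum_ord -hs -/(mkseq _ _) mkseq_nth.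
Qed.

Lemma min_dist_agree k c (u v : 'I_k.+1 -> X) :
  (forall i, agree_on c (u i) (v i)) -> c <= min_dist u -> c <= min_dist v.
Proof.
move=> huv /meetsP h; apply/meetsP => i _; apply/meetsP => j ij.
by rewrite -(agree_on_le_dist (huv i) (huv j)); move/meetsP: (h i isT); apply.
Qed.

Lemma glue (S : X -> Prop) c p q : convex dist S -> S p -> S q ->
  exists z, [/\ S z, agree_on c z p & agree_on (~` c) z q].
Proof.
move=> cvx Sp Sq.
pose a (i : 'I_2) := if i == ord0 then c else ~` c.
pose xs (i : 'I_2) := if i == ord0 then p else q.
have part : Defs.partition a.
  split; last by rewrite big_ord_recr big_ord_recr big_ord0 /= join0x /a /= joinxC.
  by case=> [[|[|i]] hi] [[|[|j]] hj] //= _; rewrite /a /= ?meetxC ?meetCx.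
have [|z [Sz comb]] := cvx 1%N a xs part; first by move=> [[|[|i]] ?] //.
by exists z; split => //; apply/eqP; [exact: (comb ord0) | exact: (comb ord_max)].
Qed.


Section Suprema.
Variables (S : X -> Prop) (x0 : X).

Section Generators.
Variable s : seq X.
Hypothesis s_in : forall y, List.In y s -> S y.
Hypothesis s_gen : forall x, S x -> exists n (a : 'I_n.+1 -> B) (xs : 'I_n.+1 -> X),
  Defs.partition a /\ (forall i, List.In (xs i) s) /\ convex_comb dist x a xs.

(* The candidate for alpha_k(S): the join over all (k+1)-tuples of generators. *)
Definition gen_bound k : B :=
  \join_(f : {ffun 'I_k.+1 -> 'I_(size s)}) min_dist (fun i => nth x0 s (f i)).

(* Replacing, one position at a time, the points of a tuple by the generators
   they coincide with on the blocks of a partition: if the positions from m on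
   already are generators, the separation degree is below gen_bound. *)
Lemma gen_cover k m (u : 'I_k.+1 -> X) : (forall i, S (u i)) ->
  (forall i : 'I_k.+1, (m <= i)%N -> exists j : 'I_(size s), u i = nth x0 s j) ->
  forall c, c <= min_dist u -> c <= gen_bound k.
Proof.
elim: m u => [|m IH] u Su gen_u c cu.
  have [f hf] := fin_all_exists (fun i => gen_u i isT).
  rewrite /gen_bound (bigD1 (finfun f)) //=; apply: le_trans (leUl _ _).
  by apply: min_dist_agree cu => i; rewrite ffunE hf agree_on_refl.
case: (ltnP m k.+1) => [hm|km]; last first.
  by apply: IH cu => // i mi; move: (leq_trans km mi); rewrite leqNgt ltn_ord.
pose im := Ordinal hm.
have [n [a [xs [part [xs_in comb]]]]] := s_gen (Su im).
apply: (le_by_partition part) => p.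
pose u' i := if i == im then xs p else u i.
apply: (IH u') => [i|i mi|].
- by rewrite /u'; case: ifP => // _; apply: s_in.
- rewrite /u'; case: eqP => [_|ne]; first by have [j <-] := In_nth_ord x0 (xs_in p); exists j.
  apply: gen_u; rewrite ltn_neqAle mi andbT; apply/eqP => e; apply: ne.
  by apply: val_inj; rewrite /= e.
- apply: min_dist_agree (le_trans (leIl _ _) cu) => i; rewrite /u'.
  case: eqP => [->|_]; last exact: agree_on_refl.
  by apply: agree_on_le (leIr _ _) _; apply/eqP; apply: comb.
Qed.

Lemma gen_bound_lub k : is_lub (alpha_set dist S k) (gen_bound k).
Proof.
split=> [b [u [Su ->]]|c ub].
  apply: (@gen_cover k k.+1 u) => // i; by rewrite leqNgt ltn_ord.
apply/joinsP => f _; apply: ub; exists (fun i => nth x0 s (f i)); split => //.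
by move=> i; apply: s_in; apply: nth_In.
Qed.

End Generators.

Hypothesis Sx0 : S x0.
Hypothesis S_gen : fin_gen dist S.

Lemma alpha_lub k : is_lub (alpha_set dist S k) (alpha dist S k).
Proof.
case: k => [|k].
  split=> [b _|c ub]; first exact: lex1.
  apply: ub; exists (fun _ => x0); split => //; apply/eqP; rewrite eq_le lex1 andbT.
  by apply/meetsP => i _; apply/meetsP => j; rewrite !ord1.
have [s [s_in s_gen]] := S_gen.
exact: (epsilon_spec _ _ (ex_intro _ _ (gen_bound_lub s_in s_gen k.+1))).
Qed.

Lemma alpha_ge k c (l : seq X) :
  size l = k.+1 -> List.Forall S l -> sep c l -> c <= alpha dist S k.
Proof.
move=> hl Sl cl; apply: le_trans (min_dist_of_seq x0 hl cl) _.
apply: (proj1 (alpha_lub k)); exists (fun i => nth x0 l i); split => // i.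
by apply: Forall_nth Sl _; rewrite hl.
Qed.

Lemma alpha_set_seq k b : alpha_set dist S k b ->
  exists l : seq X, [/\ size l = k.+1, List.Forall S l & sep b l].
Proof.
move=> [u [Su ->]]; exists [seq u i | i <- enum 'I_k.+1]; split.
- by rewrite size_map size_enum_ord.
- exact: Forall_tuple.
- by rewrite -le_min_dist.
Qed.

Lemma alpha_le k J :
  (forall c (l : seq X), size l = k.+1 -> List.Forall S l -> sep c l -> c <= J) ->
  alpha dist S k <= J.
Proof.
move=> h; apply: (proj2 (alpha_lub k)) => b /alpha_set_seq [l [hl Sl bl]].
exact: h hl Sl bl.
Qed.

End Suprema.

Section Decomposition.
Variables (x0 : X) (U : X -> Prop).
Hypothesis X_convex : convex dist (fun _ => True).
Hypothesis X_gen : fin_gen dist (fun _ => True).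
Hypothesis U_convex : convex dist U.
Hypothesis U_gen : fin_gen dist U.
Hypothesis U_x0 : U x0.

Local Notation perpU := (perp dist U x0).

Lemma perp_x0 : perpU x0.
Proof. by move=> u _; rewrite /orth dist_self joinx0. Qed.

Lemma perp_agree_U c y p : perpU y -> U p -> agree_on c y p -> agree_on c y x0.
Proof.
move=> Py Up; rewrite /agree_on -!lex0; apply: le_trans; apply: leI2 => //.
by rewrite [dist y p]dist_sym (Py p Up) leUr.
Qed.

Lemma projection_list x (l : seq X) : List.Forall U l ->
  exists r p, [/\ U p, agree_on r x p & all (fun g => ~` r <= dist x g) l].
Proof.
elim: l => [_|g l IH /List.Forall_cons_iff [Ug /IH [r [p [Up xp far]]]]].
  by exists \bot, x0; rewrite /agree_on meet0x.
have [z [Uz zp zg]] := glue r U_convex Up Ug.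
exists (r `|` ~` dist x g), z; split => //=.
  have xz : agree_on r x z by apply: agree_on_trans xp _; rewrite agree_onC.
  rewrite agree_onU xz /=.
  apply: (agree_on_cases (b := r)).
    exact: agree_on_le (leIr _ _) xz.
  apply: (@agree_on_trans _ _ g).
    by apply: agree_on_le (leIl _ _) _; rewrite /agree_on meetCx.
  by apply: agree_on_le (leIr _ _) _; rewrite agree_onC.
rewrite complU complK leIr /=; apply: sub_all far => g' h; exact: le_trans (leIl _ _) h.
Qed.

Definition projects x r p : Prop :=
  [/\ U p, agree_on r x p & forall u, U u -> ~` r <= dist x u].

(* Finite generation reduces the projection onto U to its generators. *)
Lemma projection x : exists r p, projects x r p.
Proof.
have [s [s_in s_gen]] := U_gen.
have [r [p [Up xp far]]] := projection_list x (proj2 (List.Forall_forall _ _) s_in).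
exists r, p; split => // u /s_gen [n [a [xs [part [xs_in comb]]]]].
apply: (le_by_partition part) => i.
have ux : agree_on (~` r `&` a i) u (xs i) by apply: agree_on_le (leIr _ _) _; apply/eqP.
rewrite (agree_on_le_dist (agree_on_refl _ x) ux); apply: le_trans (leIl _ _) _.
by move/Forall_all/List.Forall_forall: far; apply.
Qed.

Definition decomposes x r p q : Prop :=
  projects x r p /\ [/\ perpU q, agree_on r q x0 & agree_on (~` r) q x].

Lemma decomposition x : exists r p q, decomposes x r p q.
Proof.
have [r [p [Up xp far]]] := projection x.
have [q [_ q0 qx]] := glue r (p := x0) (q := x) X_convex I I.
exists r, p, q; split => //; split => // u Uu; rewrite /orth.
(* On r, q is 0; on ~r, both sides of the orthogonality equation are >= ~r. *)
have uq : ~` r <= dist u q.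
  by rewrite (agree_on_le_dist (agree_on_refl _ u) qx) dist_sym far.
apply: (eq_by_cases (c := r)).
  rewrite ![_ `&` r]meetC (agree_on_dist (agree_on_refl _ u) q0) meetUr.
  by move/eqP: q0 => ->; rewrite joinx0.
rewrite !meet_r // (le_trans _ (leUr _ _)) //.
by rewrite (agree_on_le_dist qx (agree_on_refl _ x0)) far.
Qed.

Lemma decomposition_fun : exists (R : X -> B) (P Q : X -> X),
  forall x, decomposes x (R x) (P x) (Q x).
Proof.
have [F hF] : exists F : X -> B * X * X,
    forall x, decomposes x (F x).1.1 (F x).1.2 (F x).2.
  apply: (choice (fun x t => decomposes x t.1.1 t.1.2 t.2)) => x.
  by have [r [p [q h]]] := decomposition x; exists (r, p, q).
by exists (fun x => (F x).1.1), (fun x => (F x).1.2), (fun x => (F x).2).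
Qed.

(* U^perp is finitely generated: the components in U^perp of generators of X
   generate it. *)
Lemma perp_fin_gen : fin_gen dist perpU.
Proof.
have [R [P [Q dec]]] := decomposition_fun.
have [s [_ s_gen]] := X_gen.
exists (map Q s); split; first by move=> _ /List.in_map_iff [g [<- _]]; have [_ []] := dec g.
move=> y Py; have [n [a [xs [part [xs_in comb]]]]] := s_gen y I.
exists n, a, (fun i => Q (xs i)); split => //; split => [i|i]; first exact: List.in_map.
have [[Ug gP _] [_ Q0 Qg]] := dec (xs i).
have yg : agree_on (a i) y (xs i) by apply/eqP; exact: comb i.
apply/eqP; apply: (agree_on_cases (b := R (xs i))).
  have yP : agree_on (a i `&` R (xs i)) y (P (xs i)).
    exact: agree_on_trans (agree_on_le (leIl _ _) yg) (agree_on_le (leIr _ _) gP).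
  apply: agree_on_trans (perp_agree_U Py Ug yP) _.
  by rewrite agree_onC; apply: agree_on_le (leIr _ _) Q0.
apply: agree_on_trans (agree_on_le (leIl _ _) yg) _.
by rewrite agree_onC; apply: agree_on_le (leIr _ _) Qg.
Qed.

Definition alpha_join n : B :=
  \join_(i < n.+1) (alpha dist U i `&` alpha dist perpU (n - i)).

Lemma le_alpha_join n c us vs :
  List.Forall U us -> List.Forall perpU vs -> sep c us -> sep c vs ->
  (0 < size us)%N -> (0 < size vs)%N -> (size us + size vs = n.+2)%N ->
  c <= alpha_join n.
Proof.
move=> Uus Pvs cus cvs us_gt0 vs_gt0 sizes.
have i_lt : ((size us).-1 < n.+1)%N by lia.
rewrite /alpha_join (bigD1 (Ordinal i_lt)) //=; apply: le_trans (leUl _ _).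
rewrite lexI (alpha_ge U_x0 U_gen _ Uus cus) ?(alpha_ge perp_x0 perp_fin_gen _ Pvs cvs) //; lia.
Qed.

Section Projections.
Variables (R : X -> B) (P Q : X -> X).
Hypothesis dec : forall x, decomposes x (R x) (P x) (Q x).

Lemma sep_U_part c l : all (fun x => c <= R x) l -> sep c l -> sep c (map P l).
Proof.
move=> cl; apply: sep_map; apply: sub_all cl => x cx.
by have [[_ xP _] _] := dec x; exact: agree_on_le cx xP.
Qed.

Lemma sep_perp_part c l : all (fun x => c <= ~` R x) l -> sep c l ->
  sep c (x0 :: map Q l).
Proof.
move=> cl scl.
have xQ : all (fun x => agree_on c x (Q x)) l.
  apply: sub_all cl => x cx; have [_ [_ _ Qx]] := dec x.
  by rewrite agree_onC; apply: agree_on_le cx Qx.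
have x0Q : all (fun x => c <= dist x0 (Q x)) l.
  apply: sub_all cl => x cx; have [[_ _ far] [_ _ Qx]] := dec x.
  rewrite (agree_on_le_dist (agree_on_refl _ x0) (agree_on_le cx Qx)) dist_sym.
  exact: le_trans cx (far x0 U_x0).
by rewrite /sep pairwise_cons -/(sep c _) all_map x0Q sep_map.
Qed.

(* Every c-separated (n+1)-tuple of X gives c <= alpha_join n: decide every
   R x, and split the tuple into the points lying in U and those away from U. *)
Lemma upper_bound n c xs : size xs = n.+1 -> sep c xs -> c <= alpha_join n.
Proof.
move=> size_xs sep_xs.
apply: (le_by_decisions (bs := map R xs)) => c' c'c; rewrite all_map => decided.
have {}sep_xs := sep_le c'c sep_xs.
pose inU x := c' <= R x.
set I := filter inU xs; set O := filter (predC inU) xs.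
have sep_I := sep_U_part (filter_all inU xs) (pairwise_filter inU sep_xs).
have away : all (fun x => c' <= ~` R x) O.
  by rewrite /O all_filter; apply: sub_all decided => x; rewrite /= /inU; case: (_ <= R x).
have sep_O := sep_perp_part away (pairwise_filter (predC inU) sep_xs).
have sizes := count_predC inU xs; rewrite -!size_filter size_xs -/I -/O in sizes.
have U_I : List.Forall U (map P I).
  by apply/List.Forall_map/List.Forall_forall => x _; have [[]] := dec x.
have perp_O : List.Forall perpU (map Q O).
  by apply/List.Forall_map/List.Forall_forall => x _; have [_ []] := dec x.
have [I_nil|I_gt0] := eqVneq (size I) 0.
  apply: (le_alpha_join (us := [:: x0]) (vs := map Q O)); rewrite ?size_map //.
  - by constructor.
  - by move: sep_O; rewrite /sep pairwise_cons => /andP[].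
  - by move: sizes; rewrite I_nil; lia.
  - by move: sizes; rewrite I_nil /=; lia.
apply: (le_alpha_join (us := map P I) (vs := x0 :: map Q O)); rewrite /= ?size_map //.
- by constructor => //; exact: perp_x0.
- by rewrite lt0n.
- by move: sizes; lia.
Qed.

End Projections.

(* Relocating points of U^perp: W v equals v where v is nonzero and equals the
   fixed point v0 of U^perp where v is zero. This turns a separated list of
   U^perp into points that are also separated from every point of U. *)
Section Relocation.
Variables (v0 : X) (W : X -> X).
Hypothesis v0_perp : perpU v0.
Hypothesis W_nonzero : forall v, agree_on (dist v x0) (W v) v.
Hypothesis W_zero : forall v, agree_on (~` dist v x0) (W v) v0.

Lemma relocate_far_U c u v : U u -> perpU v -> c <= dist v0 v ->
  c <= dist u (W v).
Proof.
move=> Uu Pv v0v; apply: (le_by_cases (c := dist v x0)).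
  rewrite (agree_on_le_dist (agree_on_refl _ u) (agree_on_le (leIr _ _) (W_nonzero v))).
  by rewrite (Pv u Uu); apply: le_trans (leIr _ _) (leUr _ _).
rewrite (agree_on_le_dist (agree_on_refl _ u) (agree_on_le (leIr _ _) (W_zero v))).
by rewrite (v0_perp Uu); apply: le_trans (le_dist_shift x0 v0v) (leUr _ _).
Qed.

Lemma relocate_sep c v v' : c <= dist v v' -> c <= dist v0 v -> c <= dist v0 v' ->
  c <= dist (W v) (W v').
Proof.
move=> vv' v0v v0v'.
have at_y b y : b <= dist y x0 -> agree_on b (W y) y by move/agree_on_le; apply.
have at_v0 b y : b <= ~` dist y x0 -> agree_on b (W y) v0 by move/agree_on_le; apply.
have via b y y' : agree_on b (W v) y -> agree_on b (W v') y' ->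
    b <= c -> c <= dist y y' -> b <= dist (W v) (W v').
  by move=> h h' bc cyy'; rewrite (agree_on_le_dist h h'); exact: le_trans bc cyy'.
have below b b' : c `&` b `&` b' <= c by rewrite -meetA leIl.
have vv0 : c <= dist v v0 by rewrite dist_sym.
apply: (le_by_cases (c := dist v x0)); apply: (le_by_cases (c := dist v' x0)).
- apply: via (at_y _ _ _) (at_y _ _ _) (below _ _) vv'; last exact: leIr.
  exact: le_trans (leIl _ _) (leIr _ _).
- apply: via (at_y _ _ _) (at_v0 _ _ _) (below _ _) vv0; last exact: leIr.
  exact: le_trans (leIl _ _) (leIr _ _).
- apply: via (at_v0 _ _ _) (at_y _ _ _) (below _ _) v0v'; last exact: leIr.
  exact: le_trans (leIl _ _) (leIr _ _).
- rewrite -meetA (meetC (~` dist v x0)) meetA.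
  by apply: le_trans (leI2 (le_dist_shift x0 vv') (lexx _)) _; rewrite meetxC le0x.
Qed.

End Relocation.

Lemma merge c1 c2 us v0 vs : List.Forall U us -> List.Forall perpU (v0 :: vs) ->
  sep c1 us -> sep c2 (v0 :: vs) ->
  exists ws, size ws = (size us + size vs)%N /\ sep (c1 `&` c2) ws.
Proof.
move=> Uus /List.Forall_cons_iff [Pv0 Pvs] sus.
rewrite /sep pairwise_cons -/(sep c2 _) => /andP [v0vs svs].
have relocation v : exists w,
    agree_on (dist v x0) w v /\ agree_on (~` dist v x0) w v0.
  by have [w [_ h1 h2]] := glue (dist v x0) (p := v) (q := v0) X_convex I I; exists w.
have [W hW] := choice _ relocation.
have W_nonzero v : agree_on (dist v x0) (W v) v by case: (hW v).
have W_zero v : agree_on (~` dist v x0) (W v) v0 by case: (hW v).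
exists (us ++ map W vs); split; first by rewrite size_cat size_map.
rewrite /sep pairwise_cat -!/(sep _ _) (sep_le (leIl _ _) sus) /=.
apply/andP; split.
  rewrite /allrel; apply/Forall_all; apply: List.Forall_impl Uus => u Uu /=.
  rewrite all_map; apply/Forall_all.
  apply: List.Forall_impl (List.Forall_and Pvs (proj2 (Forall_all _ _) v0vs)) => v [Pv v0v].
  exact: relocate_far_U Pv0 W_nonzero W_zero _ _ _ Uu Pv (le_trans (leIr _ _) v0v).
rewrite /sep pairwise_map; apply: (sub_in_pairwise (P := fun v => c2 <= dist v0 v)) v0vs svs.
move=> v v' h h' hvv' /=.
by apply: (relocate_sep W_nonzero W_zero); apply: le_trans (leIr _ _) _.
Qed.

Lemma lower_bound n i : (i <= n)%N ->
  alpha dist U i `&` alpha dist perpU (n - i) <= alpha dist (fun _ => True) n.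
Proof.
move=> i_le.
apply: (lub_meet_le (alpha_lub U_x0 U_gen i)) => b /alpha_set_seq [us [size_us Uus sus]].
rewrite meetC; apply: (lub_meet_le (alpha_lub perp_x0 perp_fin_gen (n - i))).
move=> b' /alpha_set_seq [[|v0 vs] [//= size_vs Pvs svs]].
have [ws [size_ws sws]] := merge Uus Pvs sus svs.
rewrite meetC; apply: (alpha_ge (x0 := x0) I X_gen _ _ sws).
- by move: size_ws size_vs; rewrite size_us => -> [->]; lia.
- exact/List.Forall_forall.
Qed.

Lemma alpha_decomposition n : alpha dist (fun _ => True) n = alpha_join n.
Proof.
apply/le_anti/andP; split.
  have [R [P [Q dec]]] := decomposition_fun.
  apply: (alpha_le (x0 := x0) I X_gen) => c l size_l _ sep_l.
  exact: (upper_bound dec size_l sep_l).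
by apply/joinsP => i _; apply: lower_bound; rewrite -ltnS.
Qed.

End Decomposition.

End BooleanMetric.

Theorem lemma3p2 (disp : Order.disp_t) (B : ctbDistrLatticeType disp) (X : Type)
  (dist : X -> X -> B) (x0 : X) (U : X -> Prop) :
  CFG dist (fun _ => True) -> CFG dist U -> U x0 ->
  forall n : nat,
    alpha dist (fun _ => True) n =
    \join_(i < n.+1) (alpha dist U i `&` alpha dist (perp dist U x0) (n - i)).
Proof.
move=> [[d_sym [d_zero d_tri]] [X_convex X_gen]] [_ [U_convex U_gen]] U_x0 n.
have dist_sym x y : dist x y = dist y x by exact: d_sym.
have dist_self x : dist x x = \bot by exact/(d_zero x x I I).
have dist_tri x y z : dist x z <= dist x y `|` dist y z by exact: d_tri.
exact: (alpha_decomposition dist_sym dist_self dist_tri X_convex X_gen U_convex U_gen U_x0).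
Qed.
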